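(* Let $n>2k$, $k\ge t+3$, and let $\mathcal F\subseteq\binom{[n]}{k}$ be a maximal $t$-intersecting family with $\tau_t(\mathcal F)=t+2$ and $\tau_t(\mathcal T_t(\mathcal F))=t$. If $|\mathcal T_t(\mathcal F)|=(k-t)(k-t+1)+1$, then: (i) $\mathcal F$ is a Type I family; (ii) $|\mathcal F|>((k-t)(k-t+1)+1)\binom{n-t-2}{k-t-2}-(k-t)(2(k-t)^2+1)\binom{n-t-3}{k-t-3}$.
   Context: A family is $t$-intersecting if any two members meet in at least $t$ elements. A $t$-cover of a family $\mathcal G$ (of subsets of $[n]$) is a set $S\subseteq[n]$ with $|S\cap G|\ge t$ for all $G\in\mathcal G$; $\tau_t(\mathcal G)$ is the minimum size of a $t$-cover, and $\mathcal T_t(\mathcal G)$ is the set of all $t$-covers of $\mathcal G$ of size $\tau_t(\mathcal G)$. A $t$-intersecting $\mathcal F\subseteq\binom{[n]}{k}$ is maximal if no $t$-intersecting subfamily of $\binom{[n]}{k}$ properly contains it. Type I family: choose $T,A\in\binom{[n]}{t}$ and $B,C\in\binom{[n]}{k-t}$ with $|T\cap A|=t-1$, $T\cap(B\cup C)=\emptyset$, and $A,B,C$ pairwise disjoint; choose $u\in C$; put $G_1=A\cup B$, $G_2=A\cup C$, $G_3=(T\cap A)\cup B\cup\{u\}$. The family is $\{F\in\binom{[n]}{k}: F\cap(A\cup T)=T,\ F\cap B\ne\emptyset,\ F\cap C\neq\emptyset\}\cup\{F\in\binom{[n]}{k}: A\cup T\subseteq F,\ F\cap(B\cup\{u\})\neq\emptyset\}\cup\{G_1,G_2,G_3\}$.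 *)

From mathcomp Require Import all_boot all_order all_algebra.
Set Implicit Arguments. Unset Strict Implicit. Unset Printing Implicit Defensive.

Definition kuniform (n k : nat) (F : {set {set 'I_n}}) : Prop :=
  forall A, A \in F -> #|A| = k.

Definition t_intersecting (n t : nat) (F : {set {set 'I_n}}) : Prop :=
  forall A B, A \in F -> B \in F -> t <= #|A :&: B|.

Definition maximal_tint (n k t : nat) (F : {set {set 'I_n}}) : Prop :=
  [/\ kuniform k F, t_intersecting t F &
      forall G : {set {set 'I_n}}, kuniform k G -> t_intersecting t G ->
        F \subset G -> G = F].

Definition tcover (n t : nat) (G : {set {set 'I_n}}) (S : {set 'I_n}) : bool :=
  [forall A in G, t <= #|S :&: A|].

(* tau_t(G): minimum size of a t-cover (n.+1 if no t-cover exists; this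
   default is never used in the statement since covers exist there). *)
Definition tau (n t : nat) (G : {set {set 'I_n}}) : nat :=
  \big[minn/n.+1]_(S : {set 'I_n} | tcover t G S) #|S|.

Definition Tcov (n t : nat) (G : {set {set 'I_n}}) : {set {set 'I_n}} :=
  [set S | tcover t G S & #|S| == tau t G].

Definition typeI_family (n k : nat) (T A B C : {set 'I_n}) (u : 'I_n)
  : {set {set 'I_n}} :=
  [set F : {set 'I_n} | (#|F| == k) &&
     [|| [&& F :&: (A :|: T) == T, F :&: B != set0 & F :&: C != set0],
         (A :|: T \subset F) && (F :&: (u |: B) != set0),
         F == A :|: B, F == A :|: C | F == (T :&: A) :|: (u |: B)]].

Definition is_typeI (n k t : nat) (F : {set {set 'I_n}}) : Prop :=
  exists (T A B C : {set 'I_n}) (u : 'I_n),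
    [/\ #|T| = t, #|A| = t, #|B| = k - t, #|C| = k - t & #|T :&: A| = t - 1]
    /\ [/\ T :&: (B :|: C) = set0, A :&: B = set0, A :&: C = set0,
            B :&: C = set0 & u \in C]
    /\ F = typeI_family k T A B C u.

From mathcomp Require Import all_boot all_order all_algebra.
From mathcomp Require Import zify.
Set Implicit Arguments. Unset Strict Implicit. Unset Printing Implicit Defensive.

(* Fix a minimum t-cover T0 of T_t(F), so |T0| = t, and put s := k - t. Every
   X in T_t(F) contains T0, and its residue X :\: T0 is a pair: we get
   s(s+1)+1 "edges".  A member G of F not containing T0 meets T0 in exactly
   t - 1 points (otherwise all edges would lie inside the (s+2)-set G :\: T0),
   so the "link sets" G :\: T0 are (s+1)-sets which pairwise intersect, have
   no common point (else T0 would grow into a t-cover of size t + 1), and meet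
   every edge.  Counting edges through the points of two link sets shows that
   two of them meet in one point a, say a + B and a + C, that every edge is
   either through a or a pair {b, c} with b in B, c in C, and finally that the
   link sets are exactly a + B, a + C and u + B with u in C.  All non-supersets
   of T0 then share one trace R on T0, and maximality identifies F with the
   type I family for A = a + R.
   For the bound, the supersets of T0 in F containing a are sorted by their
   first point in u + B, those avoiding a by their first points in B and in C;
   the member R + a + B is counted on top. *)

Lemma tcoverP n t (G : {set {set 'I_n}}) S :
  reflect (forall A, A \in G -> t <= #|S :&: A|) (tcover t G S).
Proof. exact: (iffP forall_inP). Qed.

Lemma tau_min n t (G : {set {set 'I_n}}) S : tcover t G S -> tau t G <= #|S|.
Proof.
rewrite /tau => GS; elim: (index_enum _) (mem_index_enum S) => [//|i s IH].
rewrite inE big_cons => /orP[/eqP<-|Ss]; first by rewrite GS geq_minl.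
by case: ifP => _; [apply: leq_trans (geq_minr _ _) (IH Ss) | apply: IH].
Qed.

Lemma tau_attained n t (G : {set {set 'I_n}}) : tau t G <= n ->
  exists2 S, tcover t G S & #|S| = tau t G.
Proof.
rewrite /tau; elim/big_rec: _ => [|S m GS IH]; first by rewrite ltnn.
by rewrite /minn; case: ifP => [_ _|_ /IH//]; exists S.
Qed.

Lemma maximal_tint_mem n k t (F : {set {set 'I_n}}) (X : {set 'I_n}) :
  t <= k -> maximal_tint k t F -> #|X| = k ->
  (forall G, G \in F -> t <= #|X :&: G|) -> X \in F.
Proof.
move=> tk [Fk Ft Fmax] Xk XF; suff <- : X |: F = F by rewrite setU11.
apply: Fmax; last exact: subsetUr.
  by move=> A /setU1P[->|/Fk].
move=> A B /setU1P[->|AF] /setU1P[->|BF]; last exact: Ft.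
- by rewrite setIid Xk.
- exact: XF.
- by rewrite setIC; apply: XF.
Qed.

Lemma cards2_eq (T : finType) (e : {set T}) x y :
  #|e| = 2 -> x \in e -> y \in e -> x != y -> e = [set x; y].
Proof.
move=> e2 xe ye xy; apply/eqP; rewrite eq_sym eqEcard subUset !sub1set xe ye.
by rewrite cards2 xy e2.
Qed.

Lemma leq_card_bigcup (I T : finType) (J : {pred I}) (f : I -> {set T}) :
  #|\bigcup_(j in J) f j| <= \sum_(j in J) #|f j|.
Proof.
elim/big_rec2: _ => [|j m U _ leUm]; first by rewrite cards0.
by rewrite (leq_trans (leq_card_setU _ U).1) ?leq_add2l.
Qed.

Lemma card_bigcup_disjoint (I T : finType) (J : {set I}) (f : I -> {set T}) :
  {in J &, forall i j, i != j -> [disjoint f i & f j]} ->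
  #|\bigcup_(j in J) f j| = \sum_(j in J) #|f j|.
Proof.
elim: {J}_.+1 {-2}J (ltnSn #|J|) => // m IH J; case: (set_0Vmem J) => [-> _ _|[i iJ]].
  by rewrite !big_set0 cards0.
rewrite (cardsD1 i) iJ ltnS => ltJ dJ.
have dJi : {in J :\ i &, forall j l, j != l -> [disjoint f j & f l]}.
  by move=> j l /setD1P[_ jJ] /setD1P[_ lJ]; apply: dJ.
rewrite !(big_setD1 i iJ) /= cardsU -(IH _ ltJ dJi).
suff /disjoint_setI0-> : [disjoint f i & \bigcup_(j in J :\ i) f j].
  by rewrite cards0 subn0.
by apply/bigcup_disjoint => j /setD1P[ji jJ]; apply: dJ; rewrite // eq_sym.
Qed.

Lemma bin2_lt s : 2 <= s -> 'C(s.+2, 2) < s * s.+1 + 1.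
Proof. by move=> s_ge2; rewrite bin2 -divn2 /=; nia. Qed.

Lemma eq_of_card_setI (T : finType) (A B : {set T}) :
  #|A| = #|B| -> #|A| <= #|A :&: B| -> A = B.
Proof.
move=> AB leAI; have /setIidPl sAB : A :&: B = A.
  by apply/eqP; rewrite eqEcard subsetIl leAI.
by apply/eqP; rewrite eqEcard sAB AB /=.
Qed.

Lemma subset_card_succ (T : finType) (X W : {set T}) :
  X \subset W -> #|W| = #|X|.+1 -> exists2 u, u \notin X & W = u |: X.
Proof.
move=> sXW cW; have /cards1P[u Du] : #|W :\: X| == 1.
  by rewrite cardsD (setIidPr sXW) cW subSnn.
have /setDP[uW uX] : u \in W :\: X by rewrite Du set11.
exists u => //; apply/eqP; rewrite eq_sym eqEcard subUset sub1set uW sXW.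
by rewrite cardsU1 uX cW add1n leqnn.
Qed.

Section LinkAndEdges.

Variables (T : finType) (s : nat) (Ws Es : {set {set T}}).
Hypothesis s_gt2 : 2 < s.
Hypothesis card_link : {in Ws, forall W : {set T}, #|W| = s.+1}.
Hypothesis link_meet : {in Ws &, forall W1 W2 : {set T}, W1 :&: W2 != set0}.
Hypothesis link_avoid : forall v, exists2 W, W \in Ws & v \notin W.
Hypothesis card_edge : {in Es, forall e : {set T}, #|e| = 2}.
Hypothesis edge_meet : {in Es & Ws, forall e W : {set T}, e :&: W != set0}.
Hypothesis card_edges : #|Es| = s * s.+1 + 1.

Lemma edge_at e W v : e \in Es -> W \in Ws -> v \in e -> v \notin W ->
  exists2 y, y \in W & e = [set v; y].
Proof.
move=> eE WW ve vW; have /set0Pn[y /setIP[ye yW]] := edge_meet eE WW.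
by exists y => //; apply: cards2_eq (card_edge eE) ve ye _; apply: contraNneq vW => ->.
Qed.

Lemma card_edges_at v W : W \in Ws -> v \notin W ->
  #|[set e in Es | v \in e]| <= s.+1.
Proof.
move=> WW vW; rewrite -(card_link WW).
apply: leq_trans (leq_imset_card (fun y => [set v; y]) W).
apply/subset_leq_card/subsetP => e /setIdP[eE ve].
by have [y yW ->] := edge_at eE WW ve vW; apply: imset_f.
Qed.

(* An edge avoiding W1 :&: W2 joins W1 :\: W2 to W2 :\: W1; every other edge
   passes through a vertex of W1 :&: W2. *)
Lemma card_edges_le W1 W2 : W1 \in Ws -> W2 \in Ws ->
  #|Es| <= #|W1 :&: W2| * s.+1 + (s.+1 - #|W1 :&: W2|) * (s.+1 - #|W1 :&: W2|).
Proof.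
move=> W1W W2W; set I := W1 :&: W2.
set Y := [set [set p.1; p.2] | p in setX (W1 :\: W2) (W2 :\: W1)].
have sEs : Es \subset (\bigcup_(v in I) [set e in Es | v \in e]) :|: Y.
  apply/subsetP => e eE; rewrite inE.
  have [/eqP eI|/set0Pn[v /setIP[ve vI]]] := boolP (e :&: I == set0); last first.
    by apply/orP; left; apply/bigcupP; exists v; rewrite // inE eE.
  have /set0Pn[x /setIP[xe xW1]] := edge_meet eE W1W.
  have /set0Pn[y /setIP[ye yW2]] := edge_meet eE W2W.
  have xW2 : x \notin W2.
    by apply: contraT => /negPn xW2; rewrite -(in_set0 x) -eI !inE xe xW1.
  have yW1 : y \notin W1.
    by apply: contraT => /negPn yW1; rewrite -(in_set0 y) -eI !inE ye yW1.
  have xy : x != y by apply: contraNneq xW2 => ->.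
  rewrite (cards2_eq (card_edge eE) xe ye xy); apply/orP; right.
  by apply/imsetP; exists (x, y); rewrite // !inE xW1 xW2 yW2 yW1.
apply: leq_trans (subset_leq_card sEs) _; apply: leq_trans (leq_card_setU _ _) _.
apply: leq_add.
  apply: leq_trans (leq_card_bigcup _ _) _; rewrite -sum_nat_const.
  apply: leq_sum => v vI; have [W WW vW] := link_avoid v; exact: card_edges_at WW vW.
apply: leq_trans (leq_imset_card _ _) _.
by rewrite cardsX !cardsD (card_link W1W) (card_link W2W) (setIC W2 W1).
Qed.

Lemma card_link_setI W1 W2 : W1 \in Ws -> W2 \in Ws -> W1 != W2 ->
  #|W1 :&: W2| != 1 -> #|W1 :&: W2| = s.
Proof.
move=> W1W W2W W12 ne1; have i_gt0 : 0 < #|W1 :&: W2| by rewrite card_gt0 link_meet.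
have i_le : #|W1 :&: W2| <= s.
  rewrite -ltnS -(card_link W1W) ltn_neqAle subset_leq_card ?subsetIl // andbT.
  apply: contra W12 => /eqP eqI; apply/eqP/eq_of_card_setI; last by rewrite eqI.
  by rewrite (card_link W1W) (card_link W2W).
have := card_edges_le W1W W2W; rewrite card_edges; nia.
Qed.

(* If no two link sets meet in a single vertex, any two distinct ones meet in
   [s] vertices; a vertex [y] outside their union would then force the link set
   avoiding the other end of an edge at [y] to contain [s + 2] vertices. *)
Lemma edges_sub_setU W1 W2 e :
  {in Ws &, forall W W', W != W' -> #|W :&: W'| = s} ->
  W1 \in Ws -> W2 \in Ws -> W1 != W2 -> e \in Es -> e \subset W1 :|: W2.
Proof.
move=> cardI W1W W2W W12 eE; apply/subsetP => y ye; apply: contraT => yU.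
have [yW1 yW2] : y \notin W1 /\ y \notin W2 by apply/norP; rewrite -in_setU.
have [x xW1 ex] := edge_at eE W1W ye yW1.
have [x' x'W2 ex'] := edge_at eE W2W ye yW2.
have xx' : x' = x.
  have : x' \in e by rewrite ex' !inE eqxx orbT.
  rewrite ex !inE => /orP[/eqP x'y|/eqP //]; by rewrite -x'y x'W2 in yW2.
rewrite {x'}xx' in x'W2 ex'.
have [W3 W3W xW3] := link_avoid x.
have yW3 : y \in W3.
  have /set0Pn[z /setIP[ze zW3]] := edge_meet eE W3W.
  by move: ze; rewrite ex !inE => /orP[/eqP <-|/eqP zx]; rewrite // -zx zW3 in xW3.
have sub_W3 W : W \in Ws -> x \in W -> W :\ x \subset W3.
  move=> WW xW; have W3W' : W3 != W by apply: contraNneq xW3 => ->.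
  suff <- : W3 :&: W = W :\ x by apply: subsetIl.
  have cWx : #|W :\ x| = s by have := cardsD1 x W; rewrite xW (card_link WW) => -[].
  apply/eqP; rewrite eqEcard cWx (cardI _ _ W3W WW W3W') leqnn andbT.
  apply/subsetP => z /setIP[zW3 zW]; rewrite !inE zW andbT.
  by apply: contraNneq xW3 => <-.
have : y |: ((W1 :|: W2) :\ x) \subset W3.
  by rewrite subUset sub1set yW3 setDUl subUset !sub_W3.
have cardU : #|W1 :|: W2| = s.+2.
  by rewrite cardsU (card_link W1W) (card_link W2W) (cardI _ _ W1W W2W W12) addSnnS addKn.
have : #|(W1 :|: W2) :\ x| = s.+1.
  by apply/eqP; rewrite -eqSS -cardU (cardsD1 x (W1 :|: W2)) inE xW1.
move=> cardUx /subset_leq_card; rewrite (card_link W3W) cardsU1 in_setD1 (negbTE yU) andbF.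
by rewrite cardUx ltnn.
Qed.

Lemma exists_link_setI1 :
  exists W1 W2, [/\ W1 \in Ws, W2 \in Ws & #|W1 :&: W2| = 1].
Proof.
have [/exists_inP[W1 W1W /exists_inP[W2 W2W /eqP]]|/exists_inPn no1] :=
  boolP [exists W1 in Ws, exists W2 in Ws, #|W1 :&: W2| == 1].
  by exists W1, W2.
have cardI : {in Ws &, forall W W', W != W' -> #|W :&: W'| = s}.
  move=> W W' WW W'W WW'; apply: (card_link_setI WW W'W WW').
  by have /exists_inPn := no1 W WW; apply.
have [e eE] : exists e, e \in Es by apply/set0Pn; rewrite -card_gt0 card_edges addn1.
have [v ve] : exists v, v \in e by apply/set0Pn; rewrite -card_gt0 card_edge.
have [W1 W1W _] := link_avoid v.
have [x xW1] : exists x, x \in W1 by apply/set0Pn; rewrite -card_gt0 card_link.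
have [W2 W2W xW2] := link_avoid x.
have W12 : W1 != W2 by apply: contraNneq xW2 => <-.
have : Es \subset [set e : {set T} | e \subset W1 :|: W2 & #|e| == 2].
  apply/subsetP => e' e'E; rewrite inE card_edge // eqxx andbT.
  exact: edges_sub_setU.
move/subset_leq_card; rewrite cards_draws cardsU (card_link W1W) (card_link W2W).
rewrite (cardI _ _ W1W W2W W12) card_edges addSnnS addKn.
by rewrite leqNgt bin2_lt // ltnW.
Qed.

Section Star.

Variables (a : T) (B C : {set T}).
Hypothesis aB_link : a |: B \in Ws.
Hypothesis aC_link : a |: C \in Ws.
Hypothesis aNB : a \notin B.
Hypothesis aNC : a \notin C.
Hypothesis disjBC : [disjoint B & C].

Let cardB : #|B| = s.
Proof. by have := card_link aB_link; rewrite cardsU1 aNB => -[]. Qed.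

Let cardC : #|C| = s.
Proof. by have := card_link aC_link; rewrite cardsU1 aNC => -[]. Qed.

(* At most [s + 1] edges pass through [a] and every other edge is a pair
   [b, c] with [b \in B], [c \in C]; the total [s * s.+1 + 1] forces both
   bounds to be attained. *)
Lemma star_edges : #|[set e in Es | a \in e]| = s.+1 /\
  {in B & C, forall b c, [set b; c] \in Es}.
Proof.
set Ea := [set e in Es | a \in e].
set Y := [set [set p.1; p.2] | p in setX B C].
have sEs : Es \subset Ea :|: (Es :&: Y).
  apply/subsetP => e eE; rewrite !inE eE /=; have [//|aNe] := boolP (a \in e).
  have /set0Pn[b /setIP[be /setU1P[ba|bB]]] := edge_meet eE aB_link.
    by rewrite -ba be in aNe.
  have /set0Pn[c /setIP[ce /setU1P[ca|cC]]] := edge_meet eE aC_link.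
    by rewrite -ca ce in aNe.
  have bc : b != c by apply: contraTneq cC => <-; rewrite (disjointFr disjBC bB).
  rewrite (cards2_eq (card_edge eE) be ce bc); apply/imsetP; exists (b, c) => //.
  by rewrite inE bB cC.
have leEa : #|Ea| <= s.+1.
  by have [W WW aW] := link_avoid a; apply: card_edges_at WW aW.
have leY : #|Y| <= s * s by rewrite (leq_trans (leq_imset_card _ _)) // cardsX cardB cardC.
have leEY : #|Es :&: Y| <= #|Y| by rewrite subset_leq_card ?subsetIr.
have := leq_trans (subset_leq_card sEs) (leq_card_setU _ _); rewrite card_edges => leE.
have tight x y z : s * s.+1 + 1 <= x + y -> x <= s.+1 -> y <= z -> z <= s * s ->
    x = s.+1 /\ y = z by nia.
have [-> cardEY] := tight _ _ _ leE leEa leEY leY; split=> //.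
have /setIidPr YE : Es :&: Y = Y by apply/eqP; rewrite eqEcard subsetIr cardEY /=.
by move=> b c bB cC; apply: (subsetP YE); apply/imsetP; exists (b, c); rewrite ?inE ?bB.
Qed.

Lemma star_link_sub W : W \in Ws -> B \subset W \/ C \subset W.
Proof.
move=> WW; have [BW|/subsetPn[b bB bNW]] := boolP (B \subset W); [by left|right].
apply/subsetP => c cC; have := edge_meet ((star_edges).2 b c bB cC) WW.
by case/set0Pn => z /setIP[/set2P[->|->] zW]; rewrite ?zW in bNW.
Qed.

Lemma star_link_avoid_uniq W W' : W \in Ws -> W' \in Ws ->
  a \notin W -> a \notin W' -> W = W'.
Proof.
move=> WW W'W aW aW'; apply: eq_of_card_setI; first by rewrite !card_link.
rewrite card_link // -(star_edges).1.
apply: leq_trans (leq_imset_card (fun y => [set a; y]) (W :&: W')).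
apply/subset_leq_card/subsetP => e /setIdP[eE ae].
have [y yW ey] := edge_at eE WW ae aW; have [y' y'W' ey'] := edge_at eE W'W ae aW'.
have yy' : y = y'.
  have : y \in e by rewrite ey !inE eqxx orbT.
  by rewrite ey' => /set2P[ya|//]; rewrite -ya yW in aW.
by rewrite ey; apply: imset_f; rewrite inE yW yy' y'W'.
Qed.

Lemma star_link_structure W3 : W3 \in Ws -> a \notin W3 -> B \subset W3 ->
  exists2 u, u \in C & Ws = [set a |: B; a |: C; u |: B].
Proof.
move=> W3W aW3 BW3.
have [u uB defW3] := subset_card_succ BW3 (etrans (card_link W3W) (congr1 S (esym cardB))).
have uC : u \in C.
  have /set0Pn[z /setIP[zW3 /setU1P[za|zC]]] := link_meet W3W aC_link.
    by rewrite -za zW3 in aW3.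
  by move: zW3; rewrite defW3 => /setU1P[<- //|zB]; rewrite (disjointFr disjBC zB) in zC.
exists u => //; apply/setP => W; rewrite !inE.
apply/idP/idP => [WW|]; last by case/orP => [/orP[]|] /eqP->; rewrite // -defW3.
have [aW|aNW] := boolP (a \in W); last first.
  by rewrite -defW3 (star_link_avoid_uniq WW W3W aNW aW3) eqxx !orbT.
have eqW (X : {set T}) : a \notin X -> #|X| = s -> X \subset W -> W == a |: X.
  move=> aX cX XW; rewrite eq_sym eqEcard subUset sub1set aW XW card_link //.
  by rewrite cardsU1 aX cX /= add1n.
by case: (star_link_sub WW) => [/(eqW _ aNB cardB)|/(eqW _ aNC cardC)] ->; rewrite ?orbT.
Qed.

End Star.

Lemma link_structure : exists a (B C : {set T}) u,
  [/\ [/\ #|B| = s, #|C| = s, a \notin B :|: C & [disjoint B & C]],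
      u \in C & Ws = [set a |: B; a |: C; u |: B]].
Proof.
have [W1 [W2 [W1W W2W /eqP/cards1P[a defI]]]] := exists_link_setI1.
have /setIP[aW1 aW2] : a \in W1 :&: W2 by rewrite defI set11.
set B := W1 :\ a; set C := W2 :\ a.
have cardB : #|B| = s by have := card_link W1W; rewrite (cardsD1 a) aW1 => -[].
have cardC : #|C| = s by have := card_link W2W; rewrite (cardsD1 a) aW2 => -[].
have aNB : a \notin B by rewrite setD11.
have aNC : a \notin C by rewrite setD11.
have disjBC : [disjoint B & C].
  rewrite -setI_eq0 -setDIl defI; apply/eqP/setP => x; rewrite !inE.
  by case: eqP.
have aB_link : a |: B \in Ws by rewrite setD1K.
have aC_link : a |: C \in Ws by rewrite setD1K.
have aNBC : a \notin B :|: C by rewrite in_setU negb_or aNB aNC.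
have [W3 W3W aW3] := link_avoid a.
case: (star_link_sub aB_link aC_link aNB aNC disjBC W3W) => [BW3|CW3].
  have [u uC ->] := star_link_structure aB_link aC_link aNB aNC disjBC W3W aW3 BW3.
  by exists a, B, C, u.
rewrite disjoint_sym in disjBC.
have [u uB ->] := star_link_structure aC_link aB_link aNC aNB disjBC W3W aW3 CW3.
by exists a, C, B, u; rewrite setUC.
Qed.

End LinkAndEdges.

Lemma setI_setU1_eq (T : finType) (X Y : {set T}) a : a \notin Y ->
  (X :&: (a |: Y) == Y) = (Y \subset X) && (a \notin X).
Proof.
move=> aY; apply/eqP/andP => [E|[YX aX]].
  by rewrite -E subsetIl; split=> //; apply: contra aY => aX; rewrite -E inE aX setU11.
apply/setP => x; rewrite !inE; case: eqP => [->|_]; first by rewrite (negbTE aX) (negbTE aY).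
by rewrite andb_idl // => /(subsetP YX).
Qed.

Lemma setI_setU1_sub (T : finType) (X R : {set T}) a : R \subset X -> a \notin X ->
  X :&: (a |: R) = R.
Proof.
move=> RX aX; apply/setP => x; rewrite !inE andb_orr (andb_idl (subsetP RX x)).
by case: eqP => [->|]; rewrite ?(negbTE aX) ?andbF.
Qed.

Lemma mem_typeI_family n k (T R B C : {set 'I_n}) a u X :
  R \subset T -> a \notin T ->
  (X \in typeI_family k T (a |: R) B C u) =
  (#|X| == k) &&
  [|| [&& T \subset X, a \notin X, X :&: B != set0 & X :&: C != set0],
      (a |: T \subset X) && (X :&: (u |: B) != set0),
      X == R :|: (a |: B), X == R :|: (a |: C) | X == R :|: (u |: B)].
Proof.
move=> RT aT; rewrite inE -setUA (setUidPr RT) setI_setU1_eq // -!andbA.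
by rewrite setI_setU1_sub // !setUA (setUC _ R).
Qed.

Lemma setI_setU1_neq0 (T : finType) (X Y : {set T}) a :
  (X :&: (a |: Y) != set0) = (a \in X) || (X :&: Y != set0).
Proof.
apply/set0Pn/orP => [[x /setIP[xX /setU1P[<-|xY]]]|[aX|/set0Pn[x /setIP[xX xY]]]].
- by left.
- by right; apply/set0Pn; exists x; rewrite inE xX.
- by exists a; rewrite !inE aX eqxx.
- by exists x; rewrite !inE xX xY orbT.
Qed.

Section TraceStructure.

Variables (n k t : nat) (F : {set {set 'I_n}}) (T0 R B C : {set 'I_n}) (a u : 'I_n).
Hypothesis tk : t <= k.
Hypothesis maxF : maximal_tint k t F.
Hypothesis card_T0 : #|T0| = t.
Hypothesis RT0 : R \subset T0.
Hypothesis card_R : #|R|.+1 = t.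
Hypothesis disjT0 : [disjoint T0 & a |: (B :|: C)].
Hypothesis uC : u \in C.
Local Notation L3 := [set a |: B; a |: C; u |: B].
Hypothesis nonsupsets : [set G in F | ~~ (T0 \subset G)] = [set R :|: W | W in L3].

Let aT0 : a \notin T0.
Proof. by rewrite (disjointFl disjT0) ?setU11. Qed.

Let disj_link (W : {set 'I_n}) : W \in L3 -> [disjoint T0 & W].
Proof.
move=> WW; apply: disjointWr disjT0; move: WW; rewrite !inE => /orP[/orP[]|] /eqP->.
- exact/setUS/subsetUl.
- exact/setUS/subsetUr.
by rewrite subUset sub1set !inE uC !orbT; apply/subsetP => x xB; rewrite !inE xB orbT.
Qed.

Let mem_L3 (W : {set 'I_n}) : W \in L3 = [|| W == a |: B, W == a |: C | W == u |: B].
Proof. by rewrite !inE orbA. Qed.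

Lemma card_setI_trace (X W : {set 'I_n}) : T0 \subset X -> [disjoint T0 & W] ->
  #|X :&: (R :|: W)| = #|R| + #|X :&: W|.
Proof.
move=> T0X dW; rewrite setIUr (setIidPr (subset_trans RT0 T0X)) cardsU.
have /disjoint_setI0-> : [disjoint R & X :&: W].
  exact: disjointWl RT0 (disjointWr (subsetIr X W) dW).
by rewrite cards0 subn0.
Qed.

Lemma supset_mem (X : {set 'I_n}) : #|X| = k -> T0 \subset X ->
  (X \in F) = [&& X :&: (a |: B) != set0, X :&: (a |: C) != set0 & X :&: (u |: B) != set0].
Proof.
move=> Xk T0X; have [_ Ft _] := maxF.
have trace_in W : W \in L3 -> R :|: W \in F.
  by move=> WL; have /setIdP[] : R :|: W \in [set G in F | ~~ (T0 \subset G)]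
    by rewrite nonsupsets imset_f.
apply/idP/idP => [XF|/and3P[XaB XaC XuB]].
  have meet W : W \in L3 -> X :&: W != set0.
    move=> WL; have := Ft _ _ XF (trace_in W WL).
    by rewrite card_setI_trace ?disj_link // -card_R -cards_eq0; lia.
  by rewrite !meet // mem_L3 eqxx ?orbT.
apply: maximal_tint_mem tk maxF Xk _ => G GF.
have [T0G|T0NG] := boolP (T0 \subset G).
  by rewrite -card_T0 subset_leq_card // subsetI T0X.
have : G \in [set G in F | ~~ (T0 \subset G)] by rewrite inE GF.
rewrite nonsupsets => /imsetP[W WL ->].
rewrite card_setI_trace ?disj_link // -card_R -add1n addnC leq_add2l card_gt0.
by move: WL; rewrite mem_L3 => /or3P[] /eqP->.
Qed.

Lemma typeI_familyE : F = typeI_family k T0 (a |: R) B C u.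
Proof.
have [Fk _ _] := maxF.
have nonsup X : (X \in F) && ~~ (T0 \subset X) = (X \in [set R :|: W | W in L3]).
  by rewrite -nonsupsets inE.
apply/setP => X; rewrite mem_typeI_family // subUset sub1set.
have [T0X|T0NX] := boolP (T0 \subset X); last first.
  rewrite !andbF /=; have -> : (X \in F) = (X \in F) && ~~ (T0 \subset X) by rewrite T0NX andbT.
  rewrite nonsup.
  apply/imsetP/andP => [[W WL ->]|[_ /or3P[]/eqP->]].
  - have /andP[/Fk -> _] : (R :|: W \in F) && ~~ (T0 \subset R :|: W).
      by rewrite nonsup imset_f.
    by rewrite eqxx; move: WL; rewrite mem_L3 => /or3P[] /eqP->; rewrite eqxx ?orbT.
  - by exists (a |: B); rewrite // mem_L3 eqxx.
  - by exists (a |: C); rewrite // mem_L3 eqxx orbT.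
  - by exists (u |: B); rewrite // mem_L3 eqxx !orbT.
have notG W : W \in L3 -> (X == R :|: W) = false.
  move=> WL; apply: contraTF T0X => /eqP->.
  by have /andP[] : (R :|: W \in F) && ~~ (T0 \subset R :|: W) by rewrite nonsup imset_f.
rewrite !notG ?mem_L3 ?eqxx ?orbT // !orbF andbT.
case: eqP => [Xk|Xnk]; last by apply/negbTE; apply: contra_notN Xnk => /Fk.
rewrite (supset_mem Xk T0X) (setI_setU1_neq0 X B a) (setI_setU1_neq0 X C a) (setI_setU1_neq0 X B u).
by case: (a \in X); case: (u \in X); case: (X :&: B == set0); case: (X :&: C == set0).
Qed.

End TraceStructure.

Lemma disjoint_setD (T : finType) (A B : {set T}) : [disjoint B & A :\: B].
Proof. by rewrite -setI_eq0 setIC setIDAC setDIl setDv setI0. Qed.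

Lemma cardsI_supset (T : finType) (X G Y : {set T}) : Y \subset X ->
  #|X :&: G| = #|Y :&: G| + #|(X :\: Y) :&: G|.
Proof.
move=> YX; rewrite -(cardsID Y (X :&: G)) setIAC (setIidPr YX).
by rewrite setDE setDE setIAC.
Qed.

Section MinimumCover.

Variables (n k t : nat) (F : {set {set 'I_n}}) (T0 : {set 'I_n}).
Hypothesis t3k : t + 3 <= k.
Hypothesis maxF : maximal_tint k t F.
Hypothesis tauF : tau t F = t + 2.
Hypothesis card_Tcov : #|Tcov t F| = (k - t) * (k - t + 1) + 1.
Hypothesis T0_cover : tcover t (Tcov t F) T0.
Hypothesis card_T0 : #|T0| = t.

Local Notation s := (k - t).
Local Notation nonsup := [set G in F | ~~ (T0 \subset G)].
Local Notation link := [set G :\: T0 | G in nonsup].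
Local Notation edges := [set X :\: T0 | X in Tcov t F].

Let Fk : kuniform k F. Proof. by case: maxF. Qed.
Let Ft : t_intersecting t F. Proof. by case: maxF. Qed.

Lemma Tcov_supset (X : {set 'I_n}) : X \in Tcov t F ->
  [/\ tcover t F X, #|X| = t + 2 & T0 \subset X].
Proof.
rewrite inE => /andP[XF /eqP cardX]; split; rewrite ?cardX //.
have : t <= #|T0 :&: X| by move/tcoverP: T0_cover; apply; rewrite inE XF cardX eqxx.
by rewrite -card_T0 => leT0; apply/setIidPl/eqP; rewrite eqEcard subsetIl.
Qed.

Lemma card_Tcov_residue (X : {set 'I_n}) : X \in Tcov t F -> #|X :\: T0| = 2.
Proof.
by case/Tcov_supset => _ cardX T0X; rewrite cardsD (setIidPr T0X) cardX card_T0; lia.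
Qed.

Lemma card_setI_nonsup (G : {set 'I_n}) : ~~ (T0 \subset G) -> #|T0 :&: G| < t.
Proof.
move=> T0NG; rewrite -card_T0 ltn_neqAle subset_leq_card ?subsetIl // andbT.
by apply: contra T0NG => /eqP eqT0; apply/setIidPl/eqP; rewrite eqEcard subsetIl eqT0 leqnn.
Qed.

Lemma exists_nonsup : exists2 G, G \in F & ~~ (T0 \subset G).
Proof.
have [/exists_inP[G GF T0NG]|/exists_inPn allsup] :=
  boolP [exists G in F, ~~ (T0 \subset G)]; first by exists G.
have : tcover t F T0.
  by apply/tcoverP => G GF; have /negPn/setIidPl-> := allsup G GF; rewrite card_T0.
by move/tau_min; rewrite tauF card_T0 addn2 ltnNge leqnSn.
Qed.

Lemma t_gt0 : 0 < t.
Proof. by have [G _ /card_setI_nonsup] := exists_nonsup; case: t. Qed.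

Lemma card_edges : #|edges| = s * s.+1 + 1.
Proof.
rewrite card_in_imset ?card_Tcov ?addn1 // => X Y XT YT eqD.
have [_ _ T0X] := Tcov_supset XT; have [_ _ T0Y] := Tcov_supset YT.
by rewrite -(setID X T0) -(setID Y T0) (setIidPr T0X) (setIidPr T0Y) eqD.
Qed.

(* If [G] missed two points of [T0], every minimum cover would contain its
   residue [X :\: T0] inside the [(s + 2)]-set [G :\: T0], leaving room for at
   most ['C(s + 2, 2)] of them. *)
Lemma card_trace G : G \in F -> ~~ (T0 \subset G) -> #|G :&: T0| = t.-1.
Proof.
move=> GF T0NG; have ltT0 := card_setI_nonsup T0NG.
have split_X X : X \in Tcov t F ->
    t <= #|T0 :&: G| + #|(X :\: T0) :&: G| /\ #|(X :\: T0) :&: G| <= 2.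
  move=> XT; have [/tcoverP XF _ T0X] := Tcov_supset XT.
  split; first by rewrite -cardsI_supset ?XF.
  by rewrite -(card_Tcov_residue XT) subset_leq_card ?subsetIl.
rewrite setIC; apply/eqP; apply: contraT => neq.
have [X0 X0T] : exists X0, X0 \in Tcov t F by apply/set0Pn; rewrite -card_gt0 card_Tcov addn1.
have low : #|T0 :&: G| = t - 2 by have [] := split_X _ X0T; lia.
have : edges \subset [set e : {set 'I_n} | e \subset G :\: T0 & #|e| == 2].
  apply/subsetP => _ /imsetP[X XT ->]; rewrite inE card_Tcov_residue // eqxx andbT.
  have [le1 le2] := split_X _ XT.
  have /setIidPl sXG : (X :\: T0) :&: G = X :\: T0.
    by apply/eqP; rewrite eqEcard subsetIl card_Tcov_residue //; lia.
  apply/subsetP => x xXT0; move: (xXT0); rewrite !inE => /andP[-> _] /=.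
  by rewrite (subsetP sXG).
move/subset_leq_card; rewrite cards_draws card_edges.
have -> : #|G :\: T0| = s.+2 by rewrite cardsD setIC low (Fk GF); lia.
by rewrite leqNgt bin2_lt //; lia.
Qed.

Lemma card_link W : W \in link -> #|W| = s.+1.
Proof.
case/imsetP => G /setIdP[GF T0NG] ->; have := cardsID T0 G.
by rewrite card_trace // (Fk GF); have := t_gt0; lia.
Qed.

Lemma link_meet : {in link &, forall W1 W2 : {set 'I_n}, W1 :&: W2 != set0}.
Proof.
move=> _ _ /imsetP[G1 /setIdP[G1F T0NG1] ->] /imsetP[G2 /setIdP[G2F T0NG2] ->].
have := Ft G1F G2F; rewrite -(cardsID T0 (G1 :&: G2)) -setDIl -card_gt0.
have : #|G1 :&: G2 :&: T0| <= t.-1.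
  by rewrite -(card_trace G1F T0NG1) subset_leq_card // setIAC subsetIl.
by have := t_gt0; lia.
Qed.

(* A point lying in every link set would extend [T0] to a [t]-cover of size [t + 1]. *)
Lemma link_avoid v : exists2 W, W \in link & v \notin W.
Proof.
have [G0 G0F T0NG0] := exists_nonsup.
have [vT0|vNT0] := boolP (v \in T0).
  by exists (G0 :\: T0); [apply/imsetP; exists G0; rewrite ?inE ?G0F | rewrite inE vT0].
have [/forall_inP vlink|/forall_inPn[W WL vW]] :=
  boolP [forall W in link, v \in W]; last by exists W.
have : tcover t F (v |: T0).
  apply/tcoverP => G GF; have [T0G|T0NG] := boolP (T0 \subset G).
    by rewrite -card_T0 subset_leq_card // subsetI subsetUr T0G.
  have /setDP[vG _] : v \in G :\: T0 by apply: vlink; apply/imsetP; exists G; rewrite ?inE ?GF.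
  have vGT0 : v \notin G :&: T0 by rewrite inE (negbTE vNT0) andbF.
  have : v |: (G :&: T0) \subset (v |: T0) :&: G.
    by rewrite subUset sub1set !inE eqxx vG /= setIC setISS ?subsetUr.
  move/subset_leq_card; rewrite cardsU1 vGT0 card_trace //; have := t_gt0; lia.
by move/tau_min; rewrite tauF cardsU1 vNT0 card_T0; lia.
Qed.

Lemma card_residue_edge : {in edges, forall e : {set 'I_n}, #|e| = 2}.
Proof. by move=> _ /imsetP[X XT ->]; apply: card_Tcov_residue. Qed.

Lemma edge_meet_link : {in edges & link, forall e W : {set 'I_n}, e :&: W != set0}.
Proof.
move=> _ _ /imsetP[X XT ->] /imsetP[G /setIdP[GF T0NG] ->].
have [/tcoverP XF _ T0X] := Tcov_supset XT.
have := XF _ GF; rewrite (cardsI_supset _ T0X) setIC (card_trace GF T0NG).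
move=> leXG; have : 0 < #|(X :\: T0) :&: G| by have := t_gt0; lia.
rewrite card_gt0 => /set0Pn[x /setIP[/setDP[xX xT0] xG]].
by apply/set0Pn; exists x; rewrite !inE xX xG xT0.
Qed.

Lemma trace_eq G G' : G \in nonsup -> G' \in nonsup ->
  #|(G :\: T0) :&: (G' :\: T0)| = 1 -> G :&: T0 = G' :&: T0.
Proof.
move=> /setIdP[GF T0NG] /setIdP[G'F T0NG'] one.
have := Ft GF G'F; rewrite -(cardsID T0 (G :&: G')) setDIl one => le.
have fill H : H \in F -> ~~ (T0 \subset H) -> G :&: G' :&: T0 \subset H :&: T0 ->
    G :&: G' :&: T0 = H :&: T0.
  move=> HF T0NH sub; apply/eqP; rewrite eqEcard sub card_trace //; have := t_gt0; lia.
rewrite -(fill G) ?setISS ?subsetIl //.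
by rewrite -(fill G') ?setISS ?subsetIr.
Qed.

(* Two non-supersets whose link sets meet in one point have the same trace;
   [a |: B] and [u |: B] both meet [a |: C] in one point. *)
Lemma nonsup_common_trace a (B C : {set 'I_n}) u :
  a \notin B :|: C -> [disjoint B & C] -> u \in C ->
  link = [set a |: B; a |: C; u |: B] ->
  exists2 R : {set 'I_n}, R \subset T0 /\ #|R|.+1 = t &
    nonsup = [set R :|: W | W in [set a |: B; a |: C; u |: B]].
Proof.
move=> aNBC disjBC uC link_eq.
have inlink W : W \in [set a |: B; a |: C; u |: B] -> exists2 G, G \in nonsup & W = G :\: T0.
  by rewrite -link_eq => /imsetP.
have [GB GBn defB] : exists2 G, G \in nonsup & a |: B = G :\: T0.
  by apply: inlink; rewrite !inE eqxx.
have [GC GCn defC] : exists2 G, G \in nonsup & a |: C = G :\: T0.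
  by apply: inlink; rewrite !inE eqxx orbT.
have [aNB aNC] : a \notin B /\ a \notin C by apply/norP; rewrite -in_setU.
have meetBC : #|(a |: B) :&: (a |: C)| = 1.
  by rewrite -setUIr (disjoint_setI0 disjBC) setU0 cards1.
have meetuC : #|(u |: B) :&: (a |: C)| = 1.
  apply/eqP/cards1P; exists u; apply/setP => x; rewrite !inE.
  case: (eqVneq x u) => [->|_]; first by rewrite uC orbT.
  have [xB|] //= := boolP (x \in B).
  by rewrite (disjointFr disjBC xB) orbF; apply: contraNF aNB => /eqP <-.
have traceC G : G \in nonsup -> G :&: T0 = GC :&: T0.
  move=> Gn; have : G :\: T0 \in [set a |: B; a |: C; u |: B].
    by rewrite -link_eq; apply/imsetP; exists G.
  have GBC : GB :&: T0 = GC :&: T0 by apply: trace_eq; rewrite // -defB -defC.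
  rewrite !inE => /orP[/orP[]|] /eqP eqW.
  - by apply: trace_eq; rewrite // eqW -defC.
  - by rewrite -GBC; apply: trace_eq; rewrite // eqW -defB setIC.
  - by apply: trace_eq; rewrite // eqW -defC.
have /setIdP[GCF T0NGC] := GCn.
exists (GC :&: T0); first by rewrite subsetIr card_trace // prednK // t_gt0.
apply/setP => G; apply/idP/imsetP => [Gn|[W /inlink[G' G'n ->] ->]].
  exists (G :\: T0); last by rewrite -(traceC G Gn) setID.
  by rewrite -link_eq; apply/imsetP; exists G.
by rewrite -(traceC G' G'n) setID.
Qed.

Lemma minimum_cover_typeI : is_typeI k t F.
Proof.
have s_gt2 : 2 < s by lia.
have tk : t <= k by lia.
have [a [B [C [u [[cardB cardC aNBC disjBC] uC link_eq]]]]] :=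
  link_structure s_gt2 card_link link_meet link_avoid card_residue_edge edge_meet_link card_edges.
have [R [RT0 card_R] nonsup_eq] := nonsup_common_trace aNBC disjBC uC link_eq.
have disjT0 : [disjoint T0 & a |: (B :|: C)].
  have link_disj W : W \in link -> [disjoint T0 & W].
    by case/imsetP => G _ ->; apply: disjoint_setD.
  rewrite -setI_eq0 setUUr setIUr setU_eq0 !setI_eq0.
  by rewrite !link_disj // link_eq !inE eqxx ?orbT.
have aT0 : a \notin T0 by rewrite (disjointFl disjT0) ?setU11.
have aR : a \notin R by apply: contra aT0; apply: (subsetP RT0).
have [disjT0B disjT0C] : [disjoint T0 & B] /\ [disjoint T0 & C].
  by split; apply: disjointWr disjT0; rewrite subsetU // ?subsetUl ?subsetUr orbT.
have disjR (X : {set 'I_n}) : [disjoint T0 & X] -> a \notin X -> (a |: R) :&: X = set0.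
  move=> dX aX; apply/eqP; rewrite setIUl setU_eq0 !setI_eq0.
  by rewrite disjoints1 aX (disjointWl RT0 dX).
have [aNB aNC] : a \notin B /\ a \notin C by apply/norP; rewrite -in_setU.
exists T0, (a |: R), B, C, u; split; last split.
- split=> //; first by rewrite cardsU1 aR /= add1n card_R.
  by rewrite setI_setU1_sub // -card_R subn1.
- split; rewrite ?disjR ?(disjoint_setI0 disjBC) //.
  by rewrite setIUr !disjoint_setI0 ?setU0.
- exact: typeI_familyE tk maxF card_T0 RT0 card_R disjT0 uC nonsup_eq.
Qed.

End MinimumCover.

Definition ksupsets (T : finType) k (P Z : {set T}) : {set {set T}} :=
  [set X : {set T} | [&& #|X| == k, P \subset X & [disjoint X & Z]]].

Lemma card_ksupsets (T : finType) k (P Z : {set T}) : [disjoint P & Z] -> #|P| <= k ->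
  'C(#|T| - #|P| - #|Z|, k - #|P|) <= #|ksupsets k P Z|.
Proof.
move=> dPZ Pk; set D := ~: (P :|: Z).
have cardD : #|D| = #|T| - #|P| - #|Z|.
  by rewrite cardsCs setCK cardsU (disjoint_setI0 dPZ) cards0 subn0 subnDA.
have disjD (X Y : {set T}) : X \subset P :|: Z -> Y \subset D -> [disjoint Y & X].
  by move=> sX sY; rewrite (disjointWl sY) // disjoints_subset setCS.
have PY (Y : {set T}) : Y \subset D -> (P :|: Y) :\: P = Y.
  move=> sY; rewrite setDUl setDv set0U; apply/setDidPl.
  by apply: disjD sY; apply: subsetUl.
rewrite -cardD -cards_draws -(card_in_imset (f := setU P)); last first.
  by move=> Y1 Y2 /setIdP[sY1 _] /setIdP[sY2 _] eqY; rewrite -(PY _ sY1) eqY PY.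
apply/subset_leq_card/subsetP => _ /imsetP[Y /setIdP[sYD /eqP cY] ->].
have dYP : [disjoint Y & P] by apply: disjD sYD; apply: subsetUl.
rewrite inE subsetUl cardsU setIC (disjoint_setI0 dYP) cards0 subn0 cY subnKC // eqxx /=.
by rewrite -setI_eq0 setIUl setU_eq0 !setI_eq0 dPZ; apply: disjD sYD; apply: subsetUr.
Qed.

Lemma leq_card_ksupsets (T : finType) k (P Z : {set T}) p z :
  [disjoint P & Z] -> #|P| = p -> p <= k -> #|Z| <= z ->
  'C(#|T| - p - z, k - p) <= #|ksupsets k P Z|.
Proof.
move=> dPZ cP pk cZ; apply: leq_trans (card_ksupsets dPZ _); rewrite cP //.
by apply: leq_bin2l; lia.
Qed.

Definition before n (W : {set 'I_n}) (y : 'I_n) : {set 'I_n} := [set x in W | x < y].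

Lemma before_uniq n (W X : {set 'I_n}) y1 y2 : y1 \in W -> y2 \in W ->
  y1 \in X -> y2 \in X -> [disjoint X & before W y1] -> [disjoint X & before W y2] ->
  y1 = y2.
Proof.
move=> y1W y2W y1X y2X d1 d2; case: (ltngtP y1 y2) => [lt12|lt21|/val_inj //].
  by have := disjointFr d2 y1X; rewrite inE y1W lt12.
by have := disjointFr d1 y2X; rewrite inE y2W lt21.
Qed.

Lemma card_before n (W : {set 'I_n}) y : y \in W -> #|before W y| < #|W|.
Proof.
move=> yW; rewrite (cardsD1 y W) yW add1n ltnS subset_leq_card //.
apply/subsetP => x /setIdP[xW xy]; rewrite !inE xW andbT.
by apply: contraTneq xy => ->; rewrite ltnn.
Qed.

Lemma addn_lt_double x y s : x < s -> y < s -> 1 + (x + y) <= 2 * s - 1.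
Proof. lia. Qed.

Section TypeICount.

Variables (n k t : nat) (T0 R B C : {set 'I_n}) (a u : 'I_n).
Hypothesis t3k : t + 3 <= k.
Hypothesis card_T0 : #|T0| = t.
Hypothesis RT0 : R \subset T0.
Hypothesis card_R : #|R|.+1 = t.
Hypothesis disjT0 : [disjoint T0 & a |: (B :|: C)].
Hypothesis aNBC : a \notin B :|: C.
Hypothesis disjBC : [disjoint B & C].
Hypothesis uC : u \in C.
Hypothesis cardB : #|B| = k - t.
Hypothesis cardC : #|C| = k - t.

Local Notation s := (k - t).
Local Notation F := (typeI_family k T0 (a |: R) B C u).
Local Notation Da y := (ksupsets k (a |: (y |: T0)) (before (u |: B) y)).
Local Notation Dbc b c := (ksupsets k (b |: (c |: T0)) (a |: (before B b :|: before C c))).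

Let t2k : t + 2 <= k. Proof. by apply: leq_trans t3k; rewrite leq_add2l. Qed.

Let notT0 x : x \in a |: (B :|: C) -> x \notin T0.
Proof. by move=> x_in; rewrite (disjointFl disjT0 x_in). Qed.

Let aT0 : a \notin T0. Proof. by rewrite notT0 ?setU11. Qed.
Let BT0 b : b \in B -> b \notin T0. Proof. by move=> bB; rewrite notT0 // !inE bB orbT. Qed.
Let CT0 c : c \in C -> c \notin T0. Proof. by move=> cC; rewrite notT0 // !inE cC !orbT. Qed.
Let aB : a \notin B. Proof. by apply: contra aNBC => aB; rewrite inE aB. Qed.
Let aC : a \notin C. Proof. by apply: contra aNBC => aC; rewrite inE aC orbT. Qed.
Let uB : u \notin B. Proof. by rewrite (disjointFl disjBC uC). Qed.

Lemma Da_sub y : y \in u |: B -> Da y \subset F.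
Proof.
move=> yW; apply/subsetP => X; rewrite inE => /and3P[/eqP cX PX _].
rewrite mem_typeI_family // cX eqxx /=; apply/orP; right; apply/orP; left.
have /andP[aX /andP[yX T0X]] : [&& a \in X, y \in X & T0 \subset X].
  by move: PX; rewrite !subUset !sub1set.
by rewrite subUset sub1set aX T0X; apply/set0Pn; exists y; rewrite inE yX.
Qed.

Lemma Dbc_sub b c : b \in B -> c \in C -> Dbc b c \subset F.
Proof.
move=> bB cC; apply/subsetP => X; rewrite inE => /and3P[/eqP cX PX dX].
rewrite mem_typeI_family // cX eqxx /=; apply/orP; left.
have /andP[bX /andP[cX' T0X]] : [&& b \in X, c \in X & T0 \subset X].
  by move: PX; rewrite !subUset !sub1set.
rewrite T0X (disjointFl dX) ?setU11 //=.
by apply/andP; split; apply/set0Pn; [exists b | exists c]; rewrite inE ?bX ?cX'.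
Qed.

Lemma card_Da y : y \in u |: B -> 'C(n - (t + 2) - s, k - (t + 2)) <= #|Da y|.
Proof.
move=> yW; rewrite -{1}(card_ord n).
have W_T0 x : x \in u |: B -> x \notin T0 by move=> /setU1P[->|/BT0 //]; apply: CT0.
have aW : a \notin u |: B.
  by rewrite !inE negb_or aB andbT; apply: contraNneq aC => ->.
have cW : #|u |: B| = s.+1 by rewrite cardsU1 uB cardB.
apply: leq_card_ksupsets; last by rewrite -ltnS -cW card_before.
- rewrite disjoints_subset; apply/subsetP => x xP; rewrite inE.
  apply/negP => /setIdP[xW ltxy].
  move: xP => /setU1P[xa|/setU1P[xy|xT0]].
  + by move: aW; rewrite -xa xW.
  + by move: ltxy; rewrite xy ltnn.
  + by move: xT0; rewrite (negbTE (W_T0 _ xW)).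
- rewrite cardsU1 cardsU1 (negbTE (W_T0 _ yW)) card_T0 !inE negb_or (negbTE aT0) andbT /=.
  have ay : a != y by apply: contraTneq yW => <-.
  by rewrite ay /= !add1n addn2.
- exact: t2k.
Qed.

Lemma card_Dbc b c : b \in B -> c \in C ->
  'C(n - (t + 2) - (2 * s - 1), k - (t + 2)) <= #|Dbc b c|.
Proof.
move=> bB cC; rewrite -{1}(card_ord n).
have bC : b \notin C by rewrite (disjointFr disjBC bB).
have cB : c \notin B by rewrite (disjointFl disjBC cC).
apply: leq_card_ksupsets.
- rewrite disjoints_subset; apply/subsetP => x; rewrite /before !inE.
  case/or3P => [/eqP->|/eqP->|xT0].
  + by rewrite ltnn (negbTE bC) andbF /= orbF; apply: contraTneq bB => ->.
  + by rewrite ltnn (negbTE cB) andbF /= orbF; apply: contraTneq cC => ->.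
  have [xB xC] : x \notin B /\ x \notin C.
    by split; apply: contraL xT0; [apply: BT0 | apply: CT0].
  by rewrite (negbTE xB) (negbTE xC) /= orbF; apply: contraTneq xT0 => ->.
- have bc : b != c by apply: contraNneq bC => ->.
  by rewrite cardsU1 cardsU1 in_setU1 negb_or bc (BT0 bB) (CT0 cC) card_T0 /= !add1n addn2.
- exact: t2k.
rewrite cardsU1; apply: leq_trans (leq_add (leq_b1 _) (leq_card_setU _ _).1) _.
by apply: addn_lt_double; [rewrite -cardB | rewrite -cardC]; apply: card_before.
Qed.

Lemma Da_disjoint : {in u |: B &, forall y1 y2, y1 != y2 -> [disjoint Da y1 & Da y2]}.
Proof.
move=> y1 y2 y1W y2W; apply: contraNT => /pred0Pn[X /andP[]].
rewrite !inE => /and3P[_ P1 d1] /and3P[_ P2 d2]; apply/eqP.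
by apply: before_uniq y1W y2W _ _ d1 d2; [apply: (subsetP P1) | apply: (subsetP P2)];
  rewrite !inE eqxx ?orbT.
Qed.

Lemma Dbc_disjoint :
  {in setX B C &, forall p q, p != q -> [disjoint Dbc p.1 p.2 & Dbc q.1 q.2]}.
Proof.
move=> [b1 c1] [b2 c2] /setXP[b1B c1C] /setXP[b2B c2C].
apply: contraNT => /pred0Pn[X /andP[]].
rewrite !inE => /and3P[_ P1 d1] /and3P[_ P2 d2] /=.
have dB b c : [disjoint X & a |: (before B b :|: before C c)] -> [disjoint X & before B b].
  by apply: disjointWr; apply/subsetP => x xb; rewrite in_setU1 in_setU xb ?orbT.
have dC b c : [disjoint X & a |: (before B b :|: before C c)] -> [disjoint X & before C c].
  by apply: disjointWr; apply/subsetP => x xc; rewrite in_setU1 in_setU xc ?orbT.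
have [b1X c1X] : b1 \in X /\ c1 \in X by split; apply: (subsetP P1); rewrite !inE eqxx ?orbT.
have [b2X c2X] : b2 \in X /\ c2 \in X by split; apply: (subsetP P2); rewrite !inE eqxx ?orbT.
rewrite (before_uniq b1B b2B b1X b2X (dB _ _ d1) (dB _ _ d2)).
by rewrite (before_uniq c1C c2C c1X c2X (dC _ _ d1) (dC _ _ d2)).
Qed.

Lemma card_typeI_family_gt :
  s.+1 * 'C(n - (t + 2) - s, k - (t + 2))
    + s * s * 'C(n - (t + 2) - (2 * s - 1), k - (t + 2)) < #|F|.
Proof.
set U1 := \bigcup_(y in u |: B) Da y.
set U2 := \bigcup_(p in setX B C) Dbc p.1 p.2.
set G1 := R :|: (a |: B).
have cardU1 : s.+1 * 'C(n - (t + 2) - s, k - (t + 2)) <= #|U1|.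
  rewrite card_bigcup_disjoint; last exact: Da_disjoint.
  have cW : #|u |: B| = s.+1 by rewrite cardsU1 uB cardB.
  by rewrite -cW -sum_nat_const; apply: leq_sum => y; apply: card_Da.
have cardU2 : s * s * 'C(n - (t + 2) - (2 * s - 1), k - (t + 2)) <= #|U2|.
  rewrite card_bigcup_disjoint; last exact: Dbc_disjoint.
  have cX : #|setX B C| = s * s by rewrite cardsX cardB cardC.
  rewrite -cX -sum_nat_const.
  by apply: leq_sum => -[b c] /setXP[bB cC]; apply: card_Dbc.
have aU1 X : X \in U1 -> a \in X.
  by case/bigcupP => y _; rewrite inE => /and3P[_ /subsetP-> //]; rewrite setU11.
have aNU2 X : X \in U2 -> a \notin X.
  by case/bigcupP => p _; rewrite inE => /and3P[_ _ dX]; rewrite (disjointFl dX) ?setU11.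
have T0U X : X \in U1 :|: U2 -> T0 \subset X.
  case/setUP => /bigcupP[? _]; rewrite inE => /and3P[_ /subsetP PX _];
    by apply/subsetP => x xT0; apply: PX; rewrite !inE xT0 !orbT.
have aBT0 : [disjoint T0 & a |: B].
  by apply: disjointWr disjT0; apply/subsetP => x; rewrite !inE => /orP[->|->]; rewrite ?orbT.
have G1NU : G1 \notin U1 :|: U2.
  apply/negP => /T0U T0G1; have : T0 \subset R.
    apply/subsetP => x xT0; move: (subsetP T0G1 x xT0).
    by rewrite in_setU (disjointFr aBT0 xT0) orbF.
  by move/subset_leq_card; rewrite card_T0 -card_R ltnn.
have G1F : G1 \in F.
  rewrite mem_typeI_family // eqxx !orbT andbT cardsU.
  have /disjoint_setI0-> : [disjoint R & a |: B] by apply: disjointWl RT0 aBT0.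
  rewrite cards0 subn0 cardsU1 aB cardB /= add1n addnS -addSn card_R subnKC //.
  exact: leq_trans (leq_addr 2 t) t2k.
have sUF : G1 |: (U1 :|: U2) \subset F.
  apply/subsetP => X /setU1P[->//|/setUP[/bigcupP[y yW]|/bigcupP[[b c] /setXP[bB cC]]]].
    exact/subsetP/Da_sub.
  exact/subsetP/Dbc_sub.
have d12 : [disjoint U1 & U2].
  rewrite -setI_eq0; apply/eqP/setP => X; rewrite !inE.
  by apply/negP => /andP[/aU1 aX /aNU2]; rewrite aX.
apply: leq_trans (subset_leq_card sUF).
by rewrite cardsU1 G1NU cardsU (disjoint_setI0 d12) cards0 subn0 add1n ltnS leq_add.
Qed.

End TypeICount.

Import GRing.Theory Num.Theory.

(* Removing [z] points from an [N]-set loses at most [z * 'C(N - 1, r - 1)]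
   [r]-subsets, one batch per removed point. *)
Lemma leq_bin_sub N r z : 0 < r -> 'C(N, r) <= 'C(N - z, r) + z * 'C(N.-1, r.-1).
Proof.
case: r => // r _ /=; elim: z => [|z IH]; first by rewrite subn0 mul0n addn0.
apply: leq_trans IH _; rewrite mulSn addnA leq_add2r.
case E: (N - z) => [|m]; first by rewrite bin0n.
rewrite subnS E binS leq_add2l leq_bin2l //; lia.
Qed.

Lemma typeI_bound_arith n k t m : t + 3 <= k ->
  (k - t).+1 * 'C(n - (t + 2) - (k - t), k - (t + 2))
    + (k - t) * (k - t) * 'C(n - (t + 2) - (2 * (k - t) - 1), k - (t + 2)) < m ->
  ((((k - t) * (k - t + 1) + 1) * 'C(n - t - 2, k - t - 2))%:Z
     - ((k - t) * (2 * (k - t) ^ 2 + 1) * 'C(n - t - 3, k - t - 3))%:Z < m%:Z)%R.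
Proof.
move=> t3k; rewrite ltrBlDr -PoszD ltz_nat.
have -> : n - t - 2 = n - (t + 2) by lia.
have -> : k - t - 2 = k - (t + 2) by lia.
have -> : n - t - 3 = (n - (t + 2)).-1 by lia.
have -> : k - t - 3 = (k - (t + 2)).-1 by lia.
have r_gt0 : 0 < k - (t + 2) by lia.
have s_gt2 : 2 < k - t by lia.
move: (k - t) (n - (t + 2)) (k - (t + 2)) r_gt0 s_gt2 => s N r r_gt0 s_gt2 ltm.
have h1 := leq_bin_sub N s r_gt0; have h2 := leq_bin_sub N (2 * s - 1) r_gt0.
nia.
Qed.

Lemma typeI_card_gt n k t (F : {set {set 'I_n}}) : t + 3 <= k -> 0 < t -> is_typeI k t F ->
  ((((k - t) * (k - t + 1) + 1) * 'C(n - t - 2, k - t - 2))%:Z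
     - ((k - t) * (2 * (k - t) ^ 2 + 1) * 'C(n - t - 3, k - t - 3))%:Z < #|F|%:Z)%R.
Proof.
move=> t3k t_gt0 [T [A [B [C [u [[cardT cardA cardB cardC cardTA]
  [[TBC0 AB0 AC0 BC0 uC] ->]]]]]]].
have /cards1P[a defAT] : #|A :\: T| == 1.
  by rewrite cardsD setIC cardTA cardA; apply/eqP; lia.
have /setDP[aA aT] : a \in A :\: T by rewrite defAT set11.
have defA : A = a |: (T :&: A).
  by rewrite -{1}(setID A T) defAT setIC setUC.
have RT : T :&: A \subset T by apply: subsetIl.
have cardR : #|T :&: A|.+1 = t by rewrite cardTA; lia.
have aNBC : a \notin B :|: C.
  rewrite in_setU negb_or; apply/andP; split; apply/negP => ax.
    by have := in_set0 a; rewrite -AB0 inE aA ax.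
  by have := in_set0 a; rewrite -AC0 inE aA ax.
have disjT : [disjoint T & a |: (B :|: C)].
  by rewrite -setI_eq0 setIUr TBC0 setU0 setI_eq0 disjoint_sym disjoints1.
rewrite defA; apply: (@typeI_bound_arith n k t _ t3k).
by apply: card_typeI_family_gt; rewrite // -setI_eq0 BC0.
Qed.

Theorem lemma2p3 (n k t : nat) (F : {set {set 'I_n}}) :
  2 * k < n -> t + 3 <= k ->
  maximal_tint k t F ->
  tau t F = t + 2 ->
  tau t (Tcov t F) = t ->
  #|Tcov t F| = (k - t) * (k - t + 1) + 1 ->
  is_typeI k t F /\
  ((((k - t) * (k - t + 1) + 1) * 'C(n - t - 2, k - t - 2))%:Z
     - ((k - t) * (2 * (k - t) ^ 2 + 1) * 'C(n - t - 3, k - t - 3))%:Z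
     < #|F|%:Z)%R.
Proof.
move=> ltkn t3k maxF tauF tauTcov cardTcov.
have [T0 T0_cover] : exists2 T0, tcover t (Tcov t F) T0 & #|T0| = tau t (Tcov t F).
  by apply: tau_attained; rewrite tauTcov; lia.
rewrite tauTcov => cardT0.
have typeI := minimum_cover_typeI t3k maxF tauF cardTcov T0_cover cardT0.
by split=> //; exact: (typeI_card_gt t3k (t_gt0 tauF cardT0) typeI).
Qed.
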